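(* Let $A$ be a minimally AP-irreducible sign pattern matrix with all diagonal entries equal to $0$ such that $A[\alpha,\beta]$ contains no $+$ for any two distinct irreducible components $\alpha$ and $\beta$ of $A_+$. Suppose that $Q(A)$ contains an algebraically positive matrix having a simple positive eigenvalue with corresponding entrywise positive left and right eigenvectors. If $X$ is a super-pattern of $A$ such that $x_{ij}\neq a_{ij}$ for precisely one ordered pair $(i,j)$, then $Q(X)$ also contains an algebraically positive matrix having a simple positive eigenvalue with corresponding entrywise positive left and right eigenvectors.
   Context: A sign pattern matrix has entries in $\{+,-,0\}$; its qualitative class $Q(A)$ is the set of real matrices obtained by replacing each $+$ by some positive number, each $-$ by some negative number and each $0$ by $0$. A real square matrix $M$ is algebraically positive if there is a real polynomial $f$ with $f(M)$ entrywise positive. $X$ is a super-pattern of $A$ if $A$ is obtained from $X$ by replacing some (possibly none) nonzero entries with $0$. The digraph $D(M)$ of an $n\times n$ matrix $M$ has vertex set $\{1,\dots,n\}$ and an arc $i\to j$ iff $m_{ij}\neq0$; $M$ is irreducible if $n=1$ or $D(M)$ is strongly connected. For a sign pattern $A$: $A_+$ is obtained by replacing every entry that is not $+$ by $0$; $B_A$ is the sign pattern with $(B_A)_{ij}=+$ if $a_{ij}=+$ or $a_{ji}=-$, and $0$ otherwise. An irreducible sign pattern $A$ is AP-irreducible if every row and every column contains a $+$ and $B_A$ is irreducible; it is minimally AP-irreducible if it is AP-irreducible and does not remain so after replacing any single nonzero entry by $0$. $A[\alpha,\beta]$ is the submatrix with rows in $\alpha$ and columns in $\beta$. The irreducible components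 of a sign pattern $M$ are the vertex sets of the strongly connected components of $D(M)$ (maximal $\alpha$ with $M[\alpha,\alpha]$ irreducible). *)

From HB Require Import structures.
From mathcomp Require Import all_boot all_order all_algebra.
From mathcomp Require Import reals.
Set Implicit Arguments. Unset Strict Implicit. Unset Printing Implicit Defensive.
Import Order.TTheory GRing.Theory Num.Theory.
Local Open Scope ring_scope.

Inductive sgn := SPos | SNeg | SZero.

Definition is_pos (s : sgn) : bool := if s is SPos then true else false.
Definition is_neg (s : sgn) : bool := if s is SNeg then true else false.
Definition is_nz (s : sgn) : bool := if s is SZero then false else true.

Notation spat n := 'M[sgn]_n.+1.

Definition in_Q (R : realType) (n : nat) (A : spat n) (M : 'M[R]_n.+1) : Prop :=
  forall i j, match A i j with
              | SPos => 0 < M i j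
              | SNeg => M i j < 0
              | SZero => M i j == 0
              end.

Definition alg_pos (R : realType) (n : nat) (M : 'M[R]_n.+1) : Prop :=
  exists f : {poly R}, forall i j, 0 < (horner_mx M f) i j.

Definition simple_pos_eig_pos_vecs (R : realType) (n : nat) (M : 'M[R]_n.+1)
  : Prop :=
  exists r : R, [/\ 0 < r, mup r (char_poly M) = 1%N &
    exists (v : 'cV[R]_n.+1) (u : 'rV[R]_n.+1),
      [/\ M *m v = r *: v, u *m M = r *: u,
          forall i, 0 < v i 0 & forall i, 0 < u 0 i]].

Definition arc (n : nat) (A : spat n) : rel 'I_n.+1 := fun i j => is_nz (A i j).

Definition irreducible_sp (n : nat) (A : spat n) : Prop :=
  n.+1 = 1%N \/ forall i j, connect (arc A) i j.

Definition pos_part (n : nat) (A : spat n) : spat n :=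
  \matrix_(i, j) if is_pos (A i j) then SPos else SZero.

Definition B_of (n : nat) (A : spat n) : spat n :=
  \matrix_(i, j) if is_pos (A i j) || is_neg (A j i) then SPos else SZero.

Definition AP_irreducible (n : nat) (A : spat n) : Prop :=
  [/\ irreducible_sp A,
      forall i, exists j, A i j = SPos,
      forall j, exists i, A i j = SPos
    & irreducible_sp (B_of A)].

Definition zero_entry (n : nat) (A : spat n) (i j : 'I_n.+1) : spat n :=
  \matrix_(k, l) if (k == i) && (l == j) then SZero else A k l.

Definition min_AP_irreducible (n : nat) (A : spat n) : Prop :=
  AP_irreducible A /\
  forall i j, is_nz (A i j) -> ~ AP_irreducible (zero_entry A i j).

Definition same_comp (n : nat) (M : spat n) (i j : 'I_n.+1) : bool :=
  connect (arc M) i j && connect (arc M) j i.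

Definition super_pattern (n : nat) (X A : spat n) : Prop :=
  forall i j, A i j = X i j \/ A i j = SZero.

From Pilot Require Import Defs.
From HB Require Import structures.
From mathcomp Require Import all_boot all_order all_algebra.
From mathcomp Require Import reals polyrcf.
From mathcomp Require Import ring.

(* Let (i, j) be the entry where X
   differs from A and close it into a cycle i -> j ~> i along a path of D(A):
   its matrix C, with sign sg(x_ij), has equal row and column sums.  If
   u M = r u and M v = r v with u, v > 0, then W = diag(u) M diag(v) also has
   equal row and column sums, hence so has W + tC.  Any such "balanced" W with
   positive row sums s_k is turned back into the matrix
   N_kl = c / u_k * W_kl * u_l * \prod_(m != l) s_m, which has left eigenvector
   u and right eigenvector (s_l / u_l), and which is M for t = 0 and a suitable
   constant c.  The entries of N(t), its eigenvalue, f(N(t)) and the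
   derivative of the characteristic polynomial at the eigenvalue are
   polynomials in t, so the strict conditions at t = 0 (the nonzero signs of
   M, algebraic positivity, simplicity of the eigenvalue) persist for small
   t > 0, while the zero entry (i, j) of M acquires the sign of
   C_ij = sg(x_ij). *)

Set Implicit Arguments.
Unset Strict Implicit.
Unset Printing Implicit Defensive.
Import Order.TTheory GRing.Theory Num.Theory.
Local Open Scope ring_scope.

Section NearZeroRight.
Variable R : rcfType.

Definition near_0plus (P : R -> Prop) :=
  exists2 d : R, 0 < d & forall t, 0 < t < d -> P t.

Lemma near_0plus_T : near_0plus (fun _ => True).
Proof. by exists 1. Qed.

Lemma near_0plus_mono (P Q : R -> Prop) :
  (forall t, P t -> Q t) -> near_0plus P -> near_0plus Q.
Proof. by move=> PQ [d d_gt0 Pd]; exists d => // t /Pd /PQ. Qed.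

Lemma near_0plus_and (P Q : R -> Prop) :
  near_0plus P -> near_0plus Q -> near_0plus (fun t => P t /\ Q t).
Proof.
move=> [d1 d1_gt0 P1] [d2 d2_gt0 P2].
exists (Num.min d1 d2) => [|t /andP[t_gt0]]; first by rewrite lt_min d1_gt0.
rewrite lt_min => /andP[t1 t2].
by split; [apply: P1 | apply: P2]; rewrite t_gt0.
Qed.

Lemma near_0plus_forall (I : finType) (P : I -> R -> Prop) :
  (forall i, near_0plus (P i)) -> near_0plus (fun t => forall i, P i t).
Proof.
move=> nearP; suff: near_0plus (fun t => forall i, i \in enum I -> P i t).
  by apply: near_0plus_mono => t Pt i; apply: Pt; rewrite mem_enum.
elim: (enum I) => [|i s IHs]; first exact: near_0plus_mono near_0plus_T.
apply: near_0plus_mono (near_0plus_and (nearP i) IHs) => t [Pit Pst] j.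
by rewrite inE => /predU1P[->|/Pst].
Qed.

Lemma near_0plus_witness (P : R -> Prop) :
  near_0plus P -> exists2 t, 0 < t & P t.
Proof.
move=> [d d_gt0 Pd]; exists (d / 2); first by rewrite divr_gt0.
by apply: Pd; rewrite divr_gt0 //= ltr_pdivrMr // ltr_pMr // ltr1n.
Qed.

Lemma near_0plus_poly_sg (p : {poly R}) : p.[0] != 0 ->
  near_0plus (fun t => Num.sg p.[t] = Num.sg p.[0]).
Proof.
move=> p0_neq0; have p0_norm_gt0 : 0 < `|p.[0]| by rewrite normr_gt0.
have [d d_gt0 near_p] : exists2 d : R, 0 < d &
    forall t : R, `|t| < d -> `|p.[t] - p.[0]| < `|p.[0]|.
  have [d d_gt0 near_p] := poly_cont 0 p p0_norm_gt0.
  by exists d => // t t_lt_d; apply: near_p; rewrite subr0.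
exists d => // t /andP[t_gt0 t_lt_d].
move: (near_p t); rewrite gtr0_norm // ltr_distl => /(_ t_lt_d).
case: (ltgtP p.[0] 0) p0_neq0 => [p0_lt0|p0_gt0|->] //= _.
- rewrite ltr0_norm // subrr => /andP[_ pt_lt0].
  by rewrite !ltr0_sg.
- rewrite gtr0_norm // subrr => /andP[pt_gt0 _].
  by rewrite !gtr0_sg.
Qed.

Lemma near_0plus_poly_gt0 (p : {poly R}) :
  0 < p.[0] -> near_0plus (fun t => 0 < p.[t]).
Proof.
move=> p0_gt0.
apply: near_0plus_mono (near_0plus_poly_sg (lt0r_neq0 p0_gt0)) => t.
by rewrite (gtr0_sg p0_gt0) => /eqP; rewrite sgr_cp0.
Qed.

End NearZeroRight.

Lemma mup_eq1_deriv (F : fieldType) (p : {poly F}) x :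
  root p x -> (mup x p == 1%N) = (p^`().[x] != 0).
Proof.
move=> /factor_theorem [q ->].
rewrite derivM derivXsubC mulr1 hornerD hornerM hornerXsubC subrr mulr0 add0r.
have [qx_neq0|/negbNE/eqP qx0] := boolP (q.[x] != 0).
  by rewrite mupMr // -[_ - _]expr1 mup_XsubCX eqxx.
have [->|q_neq0] := eqVneq q 0.
  rewrite mul0r /mup; case: arg_maxnP => //= i _ _.
  by move: i; rewrite size_poly0 => i; rewrite (ord1 i).
suff mup_ge2 : (2 <= mup x (q * ('X - x%:P)))%N by rewrite gtn_eqF.
rewrite mup_geq ?mulf_neq0 ?polyXsubC_eq0 //.
rewrite exprSr dvdp_mul2r ?polyXsubC_eq0 //.
by rewrite expr1 dvdp_XsubCl /root qx0.
Qed.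

Lemma left_eigen_root_char (F : fieldType) n (N : 'M[F]_n) (u : 'rV_n) a :
  u *m N = a *: u -> u != 0 -> root (char_poly N) a.
Proof.
by move=> uN u_neq0; rewrite -eigenvalue_root_char; apply/eigenvalueP; exists u.
Qed.

Section PolyMatrixEval.
Variables (R : comNzRingType) (n : nat) (A : 'M[{poly R}]_n.+1) (t : R).

Lemma horner_mx_map_eval (f : {poly R}) :
  horner_mx (map_mx (horner_eval t) A) f =
  map_mx (horner_eval t) (horner_mx A (map_poly polyC f)).
Proof.
rewrite map_horner_mx -map_poly_comp map_poly_id // => a _ /=.
by rewrite horner_evalE hornerC.
Qed.

Lemma deriv_char_poly_map_eval (L : {poly R}) :
  ((char_poly (map_mx (horner_eval t) A))^`()).[L.[t]] =
  (((char_poly A)^`()).[L]).[t].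
Proof. by rewrite -map_char_poly deriv_map -[RHS]horner_evalE -horner_map. Qed.

End PolyMatrixEval.

Section RowColSums.
Variables (R : comNzRingType) (n : nat).
Implicit Types (W : 'M[R]_n) (k : 'I_n).

Definition row_sum W k := \sum_l W k l.
Definition col_sum W k := \sum_l W l k.
Definition balanced W := forall k, row_sum W k = col_sum W k.

Lemma row_sumD W1 W2 k : row_sum (W1 + W2) k = row_sum W1 k + row_sum W2 k.
Proof. by rewrite -big_split; apply: eq_bigr => l _; rewrite mxE. Qed.

Lemma col_sumD W1 W2 k : col_sum (W1 + W2) k = col_sum W1 k + col_sum W2 k.
Proof. by rewrite -big_split; apply: eq_bigr => l _; rewrite mxE. Qed.

Lemma row_sumZ a W k : row_sum (a *: W) k = a * row_sum W k.
Proof. by rewrite mulr_sumr; apply: eq_bigr => l _; rewrite mxE. Qed.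

Lemma col_sumZ a W k : col_sum (a *: W) k = a * col_sum W k.
Proof. by rewrite mulr_sumr; apply: eq_bigr => l _; rewrite mxE. Qed.

Lemma balancedD W1 W2 : balanced W1 -> balanced W2 -> balanced (W1 + W2).
Proof. by move=> bal1 bal2 k; rewrite row_sumD col_sumD bal1 bal2. Qed.

Lemma balancedZ a W : balanced W -> balanced (a *: W).
Proof. by move=> bal k; rewrite row_sumZ col_sumZ bal. Qed.

Lemma row_sum_delta (a b k : 'I_n) : row_sum (delta_mx a b) k = (k == a)%:R.
Proof.
rewrite /row_sum (bigD1 b) //= big1 ?addr0 => [|l /negbTE l_neq_b].
  by rewrite mxE eqxx andbT.
by rewrite mxE l_neq_b andbF.
Qed.

Lemma col_sum_delta (a b k : 'I_n) : col_sum (delta_mx a b) k = (k == b)%:R.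
Proof.
rewrite /col_sum (bigD1 a) //= big1 ?addr0 => [|l /negbTE l_neq_a].
  by rewrite mxE eqxx.
by rewrite mxE l_neq_a.
Qed.

End RowColSums.

Section ClosedWalks.
Variables (R : comNzRingType) (n : nat).

Fixpoint walk_mx (x : 'I_n) (p : seq 'I_n) : 'M[R]_n :=
  if p is y :: p' then delta_mx x y + walk_mx y p' else 0.

Lemma walk_mx_net_flow x p k :
  row_sum (walk_mx x p) k - col_sum (walk_mx x p) k =
  (k == x)%:R - (k == last x p)%:R.
Proof.
elim: p x => [|y p IHp] x /=.
  by rewrite /row_sum /col_sum !big1 ?subrr // => l _; rewrite mxE.
rewrite row_sumD col_sumD row_sum_delta col_sum_delta opprD addrACA IHp.
by rewrite addrA subrK.
Qed.

Lemma closed_walk_balanced x p : last x p = x -> balanced (walk_mx x p).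
Proof.
move=> p_closed k; apply/eqP.
by rewrite -subr_eq0 walk_mx_net_flow p_closed subrr.
Qed.

Lemma walk_mx_out (e : rel 'I_n) x p k l :
  path e x p -> ~~ e k l -> walk_mx x p k l = 0.
Proof.
elim: p x => [|y p IHp] x /=; first by rewrite mxE.
move=> /andP[e_xy e_p] not_e_kl; rewrite mxE IHp // addr0 mxE.
case: eqP => [k_x|] //; case: eqP => [l_y|] //=.
by subst; rewrite e_xy in not_e_kl.
Qed.

End ClosedWalks.

(* The factor \prod_(m | m != l) row_sum W m stands for the division of the
   l-th column by row_sum W l, and keeps the entries polynomial in W. *)
Definition rescale_mx (R : comNzRingType) n (a b : 'I_n -> R) (W : 'M[R]_n) :=
  \matrix_(k, l) (a k * W k l * \prod_(m | m != l) row_sum W m * b l).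

Lemma map_row_sum (R S : comNzRingType) n (f : {rmorphism R -> S})
    (W : 'M[R]_n) k :
  row_sum (map_mx f W) k = f (row_sum W k).
Proof. by rewrite rmorph_sum; apply: eq_bigr => l _; rewrite mxE. Qed.

Lemma map_rescale_mx (R S : comNzRingType) n (f : {rmorphism R -> S})
    (a b : 'I_n -> R) (a' b' : 'I_n -> S) (W : 'M[R]_n) :
  f \o a =1 a' -> f \o b =1 b' ->
  map_mx f (rescale_mx a b W) = rescale_mx a' b' (map_mx f W).
Proof.
move=> fa fb; apply/matrixP => k l; rewrite !mxE !rmorphM rmorph_prod -fa -fb.
by congr (_ * _ * _ * _); apply: eq_bigr => m _; rewrite map_row_sum.
Qed.

Section RescaleEigen.
Variables (F : fieldType) (n : nat) (u : 'rV[F]_n) (c : F) (W : 'M[F]_n).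
Hypothesis u_neq0 : forall k, u 0 k != 0.

Lemma rescale_mx_left_eig : balanced W ->
  u *m rescale_mx (fun k => c / u 0 k) (fun l => u 0 l) W =
  (c * \prod_m row_sum W m) *: u.
Proof.
move=> balW; apply/rowP => l.
rewrite !mxE [in RHS](bigD1 l) //= [row_sum W l]balW.
rewrite (eq_bigr (fun k => c * \prod_(m | m != l) row_sum W m * u 0 l * W k l)).
  by rewrite -mulr_sumr /col_sum; ring.
by move=> k _; rewrite mxE; field; rewrite ?u_neq0.
Qed.

Lemma rescale_mx_right_eig :
  rescale_mx (fun k => c / u 0 k) (fun l => u 0 l) W *m
    \col_l (row_sum W l / u 0 l) =
  (c * \prod_m row_sum W m) *: \col_l (row_sum W l / u 0 l).
Proof.
apply/colP => k; rewrite !mxE.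
rewrite (eq_bigr (fun l => c / u 0 k * \prod_m row_sum W m * W k l)).
  by rewrite -mulr_sumr [row_sum W k]/row_sum; ring.
by move=> l _; rewrite !mxE [in RHS](bigD1 l) //=; field; rewrite ?u_neq0.
Qed.

End RescaleEigen.

Section SmallBalancedPerturbation.
Variables (R : realType) (n : nat) (M C : 'M[R]_n.+1) (r : R).
Variables (v : 'cV[R]_n.+1) (u : 'rV[R]_n.+1).
Hypotheses (r_gt0 : 0 < r) (Mv : M *m v = r *: v) (uM : u *m M = r *: u).
Hypotheses (v_gt0 : forall k, 0 < v k 0) (u_gt0 : forall k, 0 < u 0 k).
Hypothesis C_bal : balanced C.

Let u_neq0 k : u 0 k != 0 := lt0r_neq0 (u_gt0 k).

Let u_nonzero : u != 0.
Proof. by apply/eqP => u0; have := u_neq0 0; rewrite u0 mxE eqxx. Qed.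

Let W0 := \matrix_(k, l) (u 0 k * M k l * v l 0).
Let Wt t := W0 + t *: C.

Let row_sum_W0 k : row_sum W0 k = r * (u 0 k * v k 0).
Proof.
rewrite (_ : r * _ = u 0 k * (r *: v) k 0); last by rewrite mxE; ring.
by rewrite -Mv mxE mulr_sumr; apply: eq_bigr => l _; rewrite mxE; ring.
Qed.

Let col_sum_W0 k : col_sum W0 k = r * (u 0 k * v k 0).
Proof.
rewrite (_ : r * _ = (r *: u) 0 k * v k 0); last by rewrite mxE; ring.
by rewrite -uM mxE mulr_suml; apply: eq_bigr => l _; rewrite mxE; ring.
Qed.

Let Wt_bal t : balanced (Wt t).
Proof.
by apply: balancedD (balancedZ _ C_bal) => k; rewrite row_sum_W0 col_sum_W0.
Qed.

Let row_sum_W0_gt0 k : 0 < row_sum W0 k.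
Proof. by rewrite row_sum_W0 !mulr_gt0. Qed.

Let c := r / \prod_k row_sum W0 k.

Let c_gt0 : 0 < c.
Proof. by rewrite divr_gt0 // prodr_gt0. Qed.

Let rescale_W0 : rescale_mx (fun k => c / u 0 k) (fun l => u 0 l) W0 = M.
Proof.
apply/matrixP => k l; rewrite /c (bigD1 l) //= !mxE row_sum_W0.
have prod_neq0 : \prod_(m | m != l) row_sum W0 m != 0.
  by rewrite lt0r_neq0 ?prodr_gt0.
by field; rewrite prod_neq0 lt0r_neq0 ?u_neq0 ?lt0r_neq0.
Qed.

Let Wp : 'M[{poly R}]_n.+1 := map_mx polyC W0 + 'X *: map_mx polyC C.
Let Np := rescale_mx (fun k => (c / u 0 k)%:P) (fun l => (u 0 l)%:P) Wp.
Let Lp := c%:P * \prod_k row_sum Wp k.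
Let Dp := ((char_poly Np)^`()).[Lp].
Let N t := map_mx (horner_eval t) Np.

Let Wp_eval t : map_mx (horner_eval t) Wp = Wt t.
Proof. by apply/matrixP => k l; rewrite !mxE horner_evalE !hornerE. Qed.

Let N_eval t : N t = rescale_mx (fun k => c / u 0 k) (fun l => u 0 l) (Wt t).
Proof.
rewrite /N (@map_rescale_mx _ _ _ _ _ _ (fun k => c / u 0 k) (fun l => u 0 l)).
  by rewrite Wp_eval.
all: by move=> k /=; rewrite horner_evalE hornerC.
Qed.

Let row_sum_Wp_eval t k : (row_sum Wp k).[t] = row_sum (Wt t) k.
Proof. by rewrite -Wp_eval map_row_sum. Qed.

Let Lp_eval t : Lp.[t] = c * \prod_k row_sum (Wt t) k.
Proof.
rewrite hornerM hornerC horner_prod.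
by under eq_bigr do rewrite row_sum_Wp_eval.
Qed.

Let Wt0 : Wt 0 = W0.
Proof. by rewrite /Wt scale0r addr0. Qed.

Let N_eval0 : N 0 = M.
Proof. by rewrite N_eval Wt0 rescale_W0. Qed.

Let Lp_eval0 : Lp.[0] = r.
Proof. by rewrite Lp_eval Wt0 divfK // lt0r_neq0 ?prodr_gt0. Qed.

Let Dp_eval t : ((char_poly (N t))^`()).[Lp.[t]] = Dp.[t].
Proof. exact: deriv_char_poly_map_eval. Qed.

Let simple_eig_N t : (forall k, 0 < row_sum (Wt t) k) -> Dp.[t] != 0 ->
  simple_pos_eig_pos_vecs (N t).
Proof.
move=> rows_gt0 Dpt_neq0.
have := rescale_mx_left_eig c u_neq0 (Wt_bal t).
rewrite -N_eval -Lp_eval => left_eig.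
have := rescale_mx_right_eig c (Wt t) u_neq0.
rewrite -N_eval -Lp_eval => right_eig.
exists Lp.[t]; split.
- by rewrite Lp_eval mulr_gt0 ?prodr_gt0.
- apply/eqP; rewrite mup_eq1_deriv ?Dp_eval //.
  exact: left_eigen_root_char left_eig u_nonzero.
- exists (\col_l (row_sum (Wt t) l / u 0 l)), u; split=> // k.
  by rewrite mxE divr_gt0.
Qed.

Let sg_N_zero t k l : 0 < t -> (forall m, 0 < row_sum (Wt t) m) ->
  M k l = 0 -> Num.sg (N t k l) = Num.sg (C k l).
Proof.
move=> t_gt0 rows_gt0 Mkl0; rewrite N_eval !mxE Mkl0 mulr0 mul0r add0r.
set P := \prod_(m | m != l) _.
have P_gt0 : 0 < P by rewrite prodr_gt0.
have factor_gt0 : 0 < c / u 0 k * t * P * u 0 l.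
  have cu_gt0 := divr_gt0 c_gt0 (u_gt0 k).
  exact: mulr_gt0 (mulr_gt0 (mulr_gt0 cu_gt0 t_gt0) P_gt0) (u_gt0 l).
rewrite (_ : _ * _ * P * _ = (c / u 0 k * t * P * u 0 l) * C k l); last by ring.
by rewrite sgrM gtr0_sg ?mul1r.
Qed.

Lemma perron_balanced_perturbation (f : {poly R}) :
  (forall i j, 0 < horner_mx M f i j) -> mup r (char_poly M) = 1%N ->
  exists N : 'M[R]_n.+1, [/\ alg_pos N, simple_pos_eig_pos_vecs N,
    forall k l, M k l != 0 -> Num.sg (N k l) = Num.sg (M k l)
  & forall k l, M k l = 0 -> Num.sg (N k l) = Num.sg (C k l)].
Proof.
move=> f_pos r_simple.
have near_rows : near_0plus (fun t => forall k, 0 < row_sum (Wt t) k).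
  apply: near_0plus_forall => k.
  apply: near_0plus_mono (near_0plus_poly_gt0 (p := row_sum Wp k) _) => [t|].
    by rewrite row_sum_Wp_eval.
  by rewrite row_sum_Wp_eval Wt0.
have near_Dp : near_0plus (fun t => Dp.[t] != 0).
  have Dp0_neq0 : Dp.[0] != 0.
    rewrite -Dp_eval N_eval0 Lp_eval0 -mup_eq1_deriv ?r_simple //.
    exact: left_eigen_root_char uM u_nonzero.
  apply: near_0plus_mono (near_0plus_poly_sg Dp0_neq0) => t sg_Dpt.
  by rewrite -sgr_eq0 sg_Dpt sgr_eq0.
have near_alg : near_0plus (fun t => forall k l, 0 < horner_mx (N t) f k l).
  apply: near_0plus_forall => k; apply: near_0plus_forall => l.
  have f_N t : horner_mx (N t) f k l = (horner_mx Np f^:P k l).[t].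
    by rewrite horner_mx_map_eval mxE.
  apply: near_0plus_mono (near_0plus_poly_gt0 (p := horner_mx Np f^:P k l) _).
    by move=> t; rewrite f_N.
  by rewrite -f_N N_eval0.
have near_sg : near_0plus (fun t =>
    forall k l, M k l != 0 -> Num.sg (N t k l) = Num.sg (M k l)).
  apply: near_0plus_forall => k; apply: near_0plus_forall => l.
  have [Mkl0|Mkl_neq0] := eqVneq (M k l) 0; first by exists 1.
  have N_entry t : N t k l = (Np k l).[t] by rewrite mxE.
  have Np0 : (Np k l).[0] = M k l by rewrite -N_entry N_eval0.
  apply: near_0plus_mono (near_0plus_poly_sg (p := Np k l) _).
    by move=> t; rewrite N_entry Np0.
  by rewrite Np0.
have [t t_gt0 [[rows_gt0 Dpt_neq0] [alg_N sg_N]]] := near_0plus_witness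
  (near_0plus_and (near_0plus_and near_rows near_Dp)
                  (near_0plus_and near_alg near_sg)).
exists (N t); split => //; first by exists f.
  exact: simple_eig_N.
by move=> k l; apply: sg_N_zero.
Qed.

End SmallBalancedPerturbation.

Lemma balanced_perturbation (R : realType) n (M C : 'M[R]_n.+1) :
  alg_pos M -> simple_pos_eig_pos_vecs M -> balanced C ->
  exists N : 'M[R]_n.+1, [/\ alg_pos N, simple_pos_eig_pos_vecs N,
    forall k l, M k l != 0 -> Num.sg (N k l) = Num.sg (M k l)
  & forall k l, M k l = 0 -> Num.sg (N k l) = Num.sg (C k l)].
Proof.
move=> [f f_pos] [r [r_gt0 r_simple [v [u [Mv uM v_gt0 u_gt0]]]]] C_bal.
exact: (perron_balanced_perturbation r_gt0 Mv uM v_gt0 u_gt0 C_bal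
  f_pos r_simple).
Qed.

Definition sgn_val (R : numDomainType) (s : sgn) : R :=
  match s with SPos => 1 | SNeg => -1 | SZero => 0 end.

Lemma sg_sgn_val (R : realDomainType) s : Num.sg (sgn_val R s) = sgn_val R s.
Proof. by case: s; rewrite /= ?sgr1 ?sgrN1 ?sgr0. Qed.

Lemma in_QP (R : realType) n (A : spat n) (M : 'M[R]_n.+1) :
  in_Q A M <-> forall i j, Num.sg (M i j) = sgn_val R (A i j).
Proof.
split=> QM i j; move: (QM i j); case: (A i j) => /=.
- exact: gtr0_sg.
- exact: ltr0_sg.
- by move/eqP->; rewrite sgr0.
- by move/eqP; rewrite sgr_cp0.
- by move/eqP; rewrite sgr_cp0.
- by move/eqP; rewrite sgr_cp0.
Qed.

Lemma irreducible_sp_path n (A : spat n) i j :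
  irreducible_sp A -> exists2 p, path (Defs.arc A) i p & last i p = j.
Proof.
case=> [[n0]|/(_ i j)/connectP[p path_ip ->]]; last by exists p.
by subst n; exists [::]; rewrite // (ord1 i) (ord1 j).
Qed.

Lemma super_pattern_eq_off n (X A : spat n) i j k l :
  super_pattern X A -> (forall k l, X k l <> A k l -> k = i /\ l = j) ->
  (k, l) != (i, j) -> X k l = A k l.
Proof.
move=> supXA only_ij kl_neq; case: (supXA k l) => [-> //|Akl]; rewrite Akl.
have XA_kl : ~ X k l <> A k l.
  by move=> /only_ij[k_i l_j]; rewrite k_i l_j eqxx in kl_neq.
by case Xkl: (X k l) => //; case: XA_kl; rewrite Xkl Akl.
Qed.

Unset Implicit Arguments.
Theorem lemma3p12 (R : realType) (n : nat) (A X : 'M[sgn]_n.+1) :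
  min_AP_irreducible A ->
  (forall i, A i i = SZero) ->
  (* A[alpha,beta] has no + for distinct irreducible components alpha, beta of A_+ *)
  (forall i j, ~~ same_comp (pos_part A) i j -> A i j <> SPos) ->
  (exists M : 'M[R]_n.+1,
      [/\ in_Q A M, alg_pos M & simple_pos_eig_pos_vecs M]) ->
  super_pattern X A ->
  (exists i j, X i j <> A i j /\
     forall k l, X k l <> A k l -> k = i /\ l = j) ->
  exists M : 'M[R]_n.+1,
    [/\ in_Q X M, alg_pos M & simple_pos_eig_pos_vecs M].
Proof.
move=> [[irrA _ _ _] _] _ _ [M [QM algM eigM]] supXA.
move=> [i [j [Xij_neq only_ij]]].
have Aij : A i j = SZero by case: (supXA i j) => // Aij; rewrite Aij in Xij_neq.
have [p path_jp last_p] := irreducible_sp_path j i irrA.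
pose s := sgn_val R (X i j).
pose C := s *: walk_mx R i (j :: p).
have C_bal : balanced C by apply/balancedZ/closed_walk_balanced.
have C_off k l : A k l = SZero -> C k l = s * ((k, l) == (i, j))%:R.
  move=> Akl; rewrite !mxE (walk_mx_out _ path_jp) ?addr0 ?xpair_eqE //.
  by rewrite /Defs.arc Akl.
have [N [algN eigN sg_nz sg_z]] := balanced_perturbation algM eigM C_bal.
exists N; split => //; apply/in_QP => k l.
have [[-> ->]|kl_neq] := eqVneq (k, l) (i, j).
  have Mij : M i j = 0 by apply/eqP; move: (QM i j); rewrite Aij.
  by rewrite sg_z // C_off // eqxx mulr1 sg_sgn_val.
rewrite (super_pattern_eq_off supXA only_ij kl_neq).
have [Mkl0|Mkl_neq0] := eqVneq (M k l) 0; last first.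
  by rewrite sg_nz //; apply: (in_QP A M).1.
have Akl : A k l = SZero.
  by move: (QM k l); rewrite Mkl0; case: (A k l); rewrite ?ltxx.
by rewrite sg_z // C_off // (negbTE kl_neq) mulr0 sgr0 Akl.
Qed.
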